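(* Let $H$ be a graph with $n$ vertices and at least $n+2$ edges. Then $H$ contains a cycle of length at most $\frac{n}{2}+1$.
   Context: Graphs may contain loops and parallel edges; a loop is a cycle of length 1 and two parallel edges form a cycle of length 2. *)

From mathcomp Require Import all_boot.
Set Implicit Arguments. Unset Strict Implicit. Unset Printing Implicit Defensive.

(* A multigraph (loops and parallel edges allowed): finite vertex type V,
   finite edge type E, and each edge has an (unordered) pair of endpoints. *)
Definition joins (V E : finType) (ends : E -> V * V) (e : E) (x y : V) : bool :=
  (ends e == (x, y)) || (ends e == (y, x)).

(* A cycle of length k >= 1: distinct vertices v_0..v_{k-1} and distinct edges
   e_0..e_{k-1} with e_i joining v_i and v_{i+1 mod k}.
   k = 1 is a loop, k = 2 is a pair of parallel edges. *)
Definition has_cycle_of_length (V E : finType) (ends : E -> V * V) (k : nat) : Prop :=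
  0 < k /\
  exists (v : 'I_k -> V) (e : 'I_k -> E),
    injective v /\ injective e /\
    forall i : 'I_k, joins ends (e i) (v i) (v (ordS i)).

From mathcomp Require Import all_boot.
From mathcomp Require Import zify.

Set Implicit Arguments. Unset Strict Implicit. Unset Printing Implicit Defensive.

(* Loops and parallel edges are cycles of length 1 and 2, so let the graph be simple with girth
   g, and suppose 2g > n + 2.  Ear lemma: if F has more edges than W has vertices outside K, then
   F contains a cycle of length at most |W \ K| + 1 or an ear of K, i.e. a path joining two
   distinct vertices of K through W \ K (delete vertices of degree at most one; a longest path
   then closes up or leaves into K at both ends).  Deleting the edges of a shortest cycle C keeps
   n + 2 - g edges for the n - g vertices off C, and a cycle there would be shorter than g, so C
   has an ear; deleting the edges of the resulting theta graph likewise yields a further ear.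
   Wherever its ends lie, the theta graph plus that ear contains two cycles, or four cycles
   covering each vertex at most twice, of total length at most n + 2 resp. 2n + 4, a
   contradiction. *)

(* lia on the goal alone: the boolean hypotheses of the context make lia very slow. *)
Ltac goal_lia := repeat match goal with H : _ |- _ => clear H end; intros; lia.

Lemma sorted_rev_sym (T : Type) (r : rel T) s : symmetric r -> sorted r (rev s) = sorted r s.
Proof. by move=> r_sym; rewrite rev_sorted; apply: eq_sorted => x y; rewrite r_sym. Qed.

Lemma rev_cons_rcons (T : Type) (x y : T) w : rev (x :: rcons w y) = y :: rcons (rev w) x.
Proof. by rewrite rev_cons rev_rcons. Qed.

Lemma val_ordS k (i : 'I_k) : val (ordS i) = if i.+1 == k then 0 else i.+1.
Proof.
rewrite /=; case: eqP => [->|ne]; first by rewrite modnn.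
by rewrite modn_small //; have := ltn_ord i; lia.
Qed.

Lemma ordS_ordS_neq k (i : 'I_k) : 2 < k -> ordS (ordS i) != i.
Proof.
move=> k_gt2; rewrite -val_eqE !val_ordS; have := ltn_ord i.
by case: ifP => [/eqP|_]; case: ifP => /=; lia.
Qed.

Lemma uniq_count_le (T : eqType) (s t : seq T) : uniq t ->
  (forall z, count_mem z s <= count_mem z t) -> uniq s.
Proof.
move=> t_uniq le_st; apply: count_mem_uniq => z.
have := le_st z; rewrite (count_uniq_mem z t_uniq).
case: (boolP (z \in s)) => [z_s|/count_memPn -> //].
have : 0 < count_mem z s by rewrite -has_count has_pred1.
by case: (z \in t) => /=; lia.
Qed.

Lemma mem_split (T : eqType) (z : T) s : z \in s -> exists s1 s2, s = s1 ++ z :: s2.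
Proof. by case/splitPr => s1 s2; exists s1, s2. Qed.

Lemma split_two (T : eqType) (x y : T) s : x \in s -> y \in s -> x != y ->
  (exists s1 s2 s3, s = s1 ++ x :: s2 ++ y :: s3) \/
  (exists s1 s2 s3, s = s1 ++ y :: s2 ++ x :: s3).
Proof.
move=> /mem_split[s1 [s2 ->]]; rewrite mem_cat inE => /orP[].
  by move=> /mem_split[t1 [t2 ->]] _; right; exists t1, t2, s2; rewrite -catA.
case/orP => [/eqP->|]; first by rewrite eqxx.
by move=> /mem_split[t1 [t2 ->]] _; left; exists s1, t1, t2.
Qed.

Definition consec (T : Type) (s : seq T) := zip s (behead s).

Lemma size_consec (T : Type) (s : seq T) : size (consec s) = (size s).-1.
Proof.
rewrite /consec size_zip size_behead; case: s => //= _ s.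
by apply/minn_idPr; exact: leqnSn.
Qed.

Lemma mem_consec (T : eqType) (s1 s2 : seq T) a b : (a, b) \in consec (s1 ++ a :: b :: s2).
Proof.
rewrite /consec; elim: s1 => [|c s1 IH] /=; first by rewrite inE eqxx.
by case: s1 IH => [|d s1] IH /=; rewrite inE IH orbT.
Qed.

Section Graph.
Variables (V E : finType) (ends : E -> V * V).
Local Notation joins := (joins ends).

Lemma joinsC e x y : joins e x y = joins e y x.
Proof. by rewrite /joins orbC. Qed.

Definition adj_in (F : {set E}) x y := [exists e in F, joins e x y].
Definition adj := adj_in setT.

Lemma adj_in_sym F : symmetric (adj_in F).
Proof. by move=> x y; apply/existsP/existsP => -[e He]; exists e; rewrite joinsC. Qed.

Lemma adj_in_adj F : subrel (adj_in F) adj.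
Proof. by move=> x y /existsP[e /andP[_ He]]; apply/existsP; exists e; rewrite in_setT. Qed.

Lemma sorted_adj_rev s : sorted adj (rev s) = sorted adj s.
Proof. exact/sorted_rev_sym/adj_in_sym. Qed.

Definition simple_cycle (s : seq V) := [&& 2 < size s, uniq s & cycle adj s].

Lemma simple_cycle_has_cycle s : simple_cycle s -> has_cycle_of_length ends (size s).
Proof.
case: s => [|x0 p] // /and3P[s_gt2 s_uniq s_cycle]; set k := size (x0 :: p); split => //.
pose v (i : 'I_k) := nth x0 (x0 :: p) i.
have v_inj : injective v by move=> i j /eqP; rewrite /v nth_uniq // => /eqP/val_inj.
have v_adj (i : 'I_k) : adj (v i) (v (ordS i)).
  move/(pathP x0): s_cycle => /(_ i); rewrite size_rcons -rcons_cons !nth_rcons /v val_ordS /=.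
  have i_lt := ltn_ord i; rewrite /k /= in i_lt; rewrite i_lt.
  case: (ltnP i (size p)) => i_p.
    by rewrite /k /= eqSS ltn_eqF //; apply.
  have -> : val i = size p by apply/anti_leq; rewrite -ltnS i_lt i_p.
  by rewrite if_same /= /k /= eqxx /=; apply.
have [e0 _] : exists e0 : E, true by case/existsP: (v_adj ord0) => e _; exists e.
pose e (i : 'I_k) := odflt e0 [pick f | joins f (v i) (v (ordS i))].
have e_joins i : joins (e i) (v i) (v (ordS i)).
  rewrite /e; case: pickP => [f -> //|none].
  by case/existsP: (v_adj i) => f /andP[_]; rewrite none.
exists v, e; split => //; split => // i j e_ij.
have := e_joins i; have := e_joins j; rewrite -e_ij /joins.
case/orP => /eqP -> /orP[] /eqP [] vij vij'; try by apply: v_inj; congruence.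
(* a crossed pair of endpoints would force [ordS (ordS i) = i] *)
all: have j_Si : j = ordS i by apply: v_inj.
all: have i_Sj : i = ordS j by apply: v_inj.
all: by have := ordS_ordS_neq i s_gt2; rewrite -j_Si -i_Sj eqxx.
Qed.

Section Simple.
Hypothesis no_loop : forall e, (ends e).1 != (ends e).2.
Hypothesis no_parallel : forall e e' x y, joins e x y -> joins e' x y -> e = e'.

Lemma adj_in_irrefl F u : ~~ adj_in F u u.
Proof.
apply/existsP => -[e /andP[_]]; rewrite /joins orbb => /eqP ends_e.
by have := no_loop e; rewrite ends_e eqxx.
Qed.

Definition incident (u : V) := [set e | ((ends e).1 == u) || ((ends e).2 == u)].

Lemma two_neighbours F u : 1 < #|F :&: incident u| ->
  exists o1 o2, [/\ o1 != o2, adj_in F u o1 & adj_in F u o2].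
Proof.
move/card_gt1P => [e1 [e2 [e1F e2F e12]]].
pose other e := if (ends e).1 == u then (ends e).2 else (ends e).1.
have joins_other e : e \in F :&: incident u -> joins e u (other e).
  rewrite !inE => /andP[_]; rewrite /other /joins.
  case: (ends e) => a b /=; case: eqP => [->|_] /=; first by rewrite eqxx.
  by move=> /eqP ->; rewrite eqxx orbT.
have adj_other e : e \in F :&: incident u -> adj_in F u (other e).
  by move=> eF; apply/existsP; exists e; move: (eF); rewrite inE => /andP[-> _]; exact: joins_other.
exists (other e1), (other e2); split; [|exact: adj_other|exact: adj_other].
apply: contra e12 => /eqP o12; apply/eqP/(no_parallel (joins_other _ e1F)).
by rewrite o12; exact: joins_other.
Qed.

Definition edges_within (W : {set V}) (F : {set E}) :=
  forall e, e \in F -> ((ends e).1 \in W) && ((ends e).2 \in W).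

Lemma adj_in_within W F x y : edges_within W F -> adj_in F x y -> (x \in W) && (y \in W).
Proof.
move=> FW /existsP[e /andP[eF]]; have := FW e eF; rewrite /joins.
by case: (ends e) => a b /= /andP[aW bW] /orP[] /eqP [<- <-]; rewrite aW bW.
Qed.

Definition short_cycle n := exists s, simple_cycle s /\ size s <= n.

Definition ear (K R : {set V}) (F : {set E}) :=
  exists x y w, [/\ x \in K, y \in K, x != y, uniq w &
    all (fun z => z \in R) w && path (adj_in F) x (rcons w y)].

Definition cycle_or_ear (W K : {set V}) (F : {set E}) :=
  short_cycle #|W :\: K|.+1 \/ ear K (W :\: K) F.

Lemma cycle_or_ear_mono (W W' K : {set V}) (F F' : {set E}) :
  W' \subset W -> F' \subset F -> cycle_or_ear W' K F' -> cycle_or_ear W K F.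
Proof.
move=> sW sF; have sWK : #|W' :\: K| <= #|W :\: K| by apply/subset_leq_card/setSD.
case=> [[c [c_cycle c_size]]|[x [y [w [xK yK xy w_uniq /andP[w_in w_path]]]]]].
  by left; exists c; split => //; apply: leq_trans c_size _.
right; exists x, y, w; split => //; apply/andP; split.
  by apply/allP => z /(allP w_in); apply/subsetP/setSD/sW.
apply: sub_path w_path => a b /existsP[e /andP[eF ab]]; apply/existsP; exists e.
by rewrite (subsetP sF _ eF).
Qed.

Definition simple_path (R : {set V}) (F : {set E}) (s : seq V) :=
  [&& s != [::], uniq s, all (fun z => z \in R) s & sorted (adj_in F) s].

Lemma simple_path_size R F s : simple_path R F s -> size s <= #|R|.
Proof.
case/and4P => _ s_uniq s_in _; rewrite -(card_uniqP s_uniq); apply: subset_leq_card.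
by apply/subsetP => z; move/allP: s_in; apply.
Qed.

Lemma simple_path_rev R F s : simple_path R F s -> simple_path R F (rev s).
Proof.
case/and4P => s_nil s_uniq s_in s_path.
rewrite /simple_path -size_eq0 size_rev size_eq0 s_nil rev_uniq s_uniq all_rev s_in.
by rewrite sorted_rev_sym //; exact: adj_in_sym.
Qed.

Lemma exists_longest_simple_path (R : {set V}) (F : {set E}) u : u \in R ->
  exists2 s, simple_path R F s & forall s', simple_path R F s' -> size s' <= size s.
Proof.
move=> u_in; pose P j := [exists t : j.-tuple V, simple_path R F t].
have P1 : P 1 by apply/existsP; exists [tuple u]; rewrite /simple_path /= u_in.
have P_bound j : P j -> j <= #|V|.
  case/existsP => t /simple_path_size; rewrite size_tuple => /leq_trans; apply.
  exact: max_card.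
case: (ex_maxnP (ex_intro _ 1 P1) P_bound) => j /existsP[t t_path] t_max.
exists t => // s' s'_path; rewrite size_tuple; apply: t_max.
by apply/existsP; exists (in_tuple s').
Qed.

Section LongestPath.
Variables (W K : {set V}) (F : {set E}).
Hypothesis F_within : edges_within W F.
Hypothesis F_deg2 : forall u, u \in W :\: K -> 1 < #|F :&: incident u|.

(* The last vertex of a longest path in [W :\: K] has a neighbour other than its predecessor [f];
   it cannot extend the path, so it closes a cycle or lies in [K]. *)
Lemma longest_path_end s x0 f :
  simple_path (W :\: K) F s -> (forall s', simple_path (W :\: K) F s' -> size s' <= size s) ->
  (forall s1 o, s = s1 ++ [:: o; last x0 s] -> o = f) ->
  (exists o, [/\ o != f, adj_in F (last x0 s) o & o \in K]) \/
  short_cycle #|W :\: K|.+1.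
Proof.
move=> s_path s_max s_pred.
have z_in : last x0 s \in W :\: K.
  case/and4P: s_path; case: s {s_max s_pred} => [|a p] // _ _ /allP p_in _.
  by apply: p_in; exact: (mem_last a p).
have [o1 [o2 [o12 adj1 adj2]]] := two_neighbours (F_deg2 z_in).
have [o [o_f adj_o]] : exists o, o != f /\ adj_in F (last x0 s) o.
  by case: (eqVneq o1 f) => [<-|]; [exists o2; rewrite eq_sym | exists o1].
have s_size := simple_path_size s_path.
case: (boolP (o \in s)) => o_s.
  right; move: s_path s_max s_pred adj_o s_size; case/splitPr: o_s => s1 s2.
  move=> s_path s_max s_pred; rewrite last_cat /=.
  case: s2 => [|z1 s2] in s_path s_max s_pred *.
    by rewrite /= (negbTE (adj_in_irrefl _ _)).
  case: s2 => [|z2 s2] in s_path s_max s_pred * => adj_o s_size.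
    by move: o_f; rewrite (s_pred s1 o) ?eqxx // last_cat.
  exists [:: o, z1, z2 & s2]; split; last first.
    by apply: leqW; apply: leq_trans _ s_size; rewrite size_cat leq_addl.
  case/and4P: s_path => _; rewrite cat_uniq => /and3P[_ _ o_uniq] _ /cat_sorted2[_ o_path].
  apply/and3P; split => //; rewrite /cycle rcons_path (sub_path (@adj_in_adj F) o_path).
  exact: adj_in_adj adj_o.
case: (boolP (o \in W :\: K)) => o_in.
  have : simple_path (W :\: K) F (rcons s o).
    case/and4P: s_path => s_nil s_uniq s_in s_srt.
    case: s {s_max s_pred s_size z_in adj1 adj2} s_nil s_uniq s_in s_srt adj_o o_s => // a p _.
    move=> p_uniq p_in /= p_srt adj_o o_p.
    rewrite /simple_path -rcons_cons rcons_uniq o_p p_uniq all_rcons o_in p_in /=.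
    by rewrite rcons_path p_srt adj_o.
  by move/s_max; rewrite size_rcons ltnn.
left; exists o; split => //; case/andP: (adj_in_within F_within adj_o) => _ oW.
by move: o_in; rewrite !inE oW andbT => /negPn.
Qed.

Lemma ear_of_deg2 :
  (forall e, e \in F -> ~~ (((ends e).1 \in K) && ((ends e).2 \in K))) -> F != set0 ->
  cycle_or_ear W K F.
Proof.
move=> F_notK /set0Pn[e0 e0F].
have [u u_in] : exists u, u \in W :\: K.
  have := F_notK e0 e0F; case/andP: (F_within e0F) => e1W e2W.
  case: (boolP ((ends e0).1 \in K)) => /= e1K e2K; last by exists (ends e0).1; rewrite inE e1K.
  by exists (ends e0).2; rewrite inE e2K.
have [s s_path s_max] := exists_longest_simple_path F u_in.
case: s s_path s_max => [|a [|b q]] s_path s_max; first by case/and4P: s_path.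
  have pred_a f s1 o : [:: a] = s1 ++ [:: o; last a [:: a]] -> o = f.
    by move/(congr1 size); rewrite size_cat /=; lia.
  case: (longest_path_end s_path s_max (pred_a a)) => [[o1 [_ adj1 o1K]]|]; last by left.
  case: (longest_path_end s_path s_max (pred_a o1)) => [[o2 [o21 adj2 o2K]]|]; last by left.
  right; exists o1, o2, [:: a]; split => //; first by rewrite eq_sym.
  by case/and4P: s_path => _ _ -> _ /=; rewrite adj2 adj_in_sym adj1.
set s := [:: a, b & q] in s_path s_max *.
have pred_last s1 o : s = s1 ++ [:: o; last a s] -> o = head a (behead (rev s)).
  by move=> ->; rewrite rev_cat.
have rs_max s' : simple_path (W :\: K) F s' -> size s' <= size (rev s).
  by move/s_max; rewrite size_rev.
have last_rs : last a (rev s) = a by rewrite /s rev_cons last_rcons.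
have pred_a s1 o : rev s = s1 ++ [:: o; last a (rev s)] -> o = b.
  by move/(congr1 rev); rewrite revK rev_cat last_rs /s => -[->].
case: (longest_path_end s_path s_max pred_last) => [[oz [_ adj_z ozK]]|]; last by left.
case: (longest_path_end (simple_path_rev s_path) rs_max pred_a) => [[oa [_ adj_a oaK]]|];
  last by left.
rewrite last_rs in adj_a.
have s_size := simple_path_size s_path.
case/and4P: s_path => _ s_uniq s_in s_srt.
have oa_s : oa \notin s by apply/negP => /(allP s_in); rewrite inE oaK.
have path_a : path (adj_in F) oa s by rewrite /= adj_in_sym adj_a.
case: (eqVneq oa oz) => [oaz|oaz].
  left; exists (oa :: s); split; last by rewrite /= ltnS.
  apply/and3P; split; [by [] | by rewrite cons_uniq oa_s |].
  rewrite /cycle rcons_path (sub_path (@adj_in_adj F) path_a) oaz.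
  exact: adj_in_adj adj_z.
by right; exists oa, oz, s; split => //; rewrite s_in rcons_path path_a.
Qed.

End LongestPath.

Lemma cycle_or_ear_of_many_edges (W K : {set V}) (F : {set E}) :
  edges_within W F -> #|W :\: K| < #|F| -> cycle_or_ear W K F.
Proof.
move: {2}#|W :\: K| (erefl #|W :\: K|) => n; elim/ltn_ind: n W F => n IH W F n_def FW n_lt.
case: (boolP [exists e in F, ((ends e).1 \in K) && ((ends e).2 \in K)]).
  case/existsP => e /and3P[eF e1K e2K]; right; exists (ends e).1, (ends e).2, [::].
  split => //; rewrite /= andbT; apply/existsP; exists e.
  by rewrite eF /joins; case: (ends e) => a b; rewrite eqxx.
move/existsPn => F_notK.
case: (boolP [exists u in W :\: K, #|F :&: incident u| <= 1]).
  (* a vertex of degree at most one can be deleted together with its edge *)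
  case/existsP => u /andP[u_in u_deg].
  have WuK : (W :\ u) :\: K = (W :\: K) :\ u by rewrite !setDDl setUC.
  have := cardsD1 u (W :\: K); rewrite u_in => card_WK.
  have := cardsID (incident u) F => card_F.
  apply: (@cycle_or_ear_mono _ (W :\ u) _ _ (F :\: incident u)).
  - exact: subD1set.
  - exact: subsetDl.
  apply: (IH #|(W :\ u) :\: K|) => //.
  - by rewrite WuK -n_def; lia.
  - move=> e; rewrite !inE => /andP[e_u eF]; move: e_u (FW e eF).
    by rewrite negb_or => /andP[-> ->].
  - by rewrite WuK; lia.
move/existsPn => F_deg.
apply: ear_of_deg2 => //.
- by move=> u u_in; have := F_deg u; rewrite u_in /= ltnNge.
- by move=> e eF; have := F_notK e; rewrite eF.
- by apply/set0Pn/card_gt0P; exact: leq_ltn_trans n_lt.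
Qed.

Definition edges_along (ps : seq (V * V)) : {set E} := [set e | has (fun p => joins e p.1 p.2) ps].

Lemma card_edges_along ps : #|edges_along ps| <= size ps.
Proof.
elim: ps => [|[a b] ps IH]; first by rewrite leqn0 cards_eq0; apply/eqP/setP => e; rewrite !inE.
have -> : edges_along ((a, b) :: ps) = [set e | joins e a b] :|: edges_along ps.
  by apply/setP => e; rewrite !inE.
apply: leq_trans (leq_card_setU _ _) _ => /=; rewrite -add1n leq_add //.
by apply/card_le1_eqP => e1 e2; rewrite !inE => ab1 ab2; exact: no_parallel ab2 ab1.
Qed.

Lemma mem_edges_along ps e a b : joins e a b -> (a, b) \in ps -> e \in edges_along ps.
Proof. by move=> e_ab ab_ps; rewrite inE; apply/hasP; exists (a, b). Qed.

Definition cycle_edges (c : seq V) := edges_along (consec (c ++ take 1 c)).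

Lemma cycle_arcs c1 x d1 y d2 : cycle adj (c1 ++ x :: d1 ++ y :: d2) ->
  sorted adj (x :: rcons d1 y) /\ sorted adj (x :: rcons (rev (d2 ++ c1)) y).
Proof.
move=> c_adj; have : sorted adj (x :: d1 ++ y :: rcons (d2 ++ c1) x).
  by move: c_adj; rewrite -(rot_cycle (size c1)) rot_size_cat /= -catA /= rcons_cat.
rewrite -cat_cons sorted_cat_cons => /andP[arc1 arc2]; split => //.
by rewrite -rev_cons_rcons sorted_adj_rev.
Qed.

Lemma chord_arcs_nonempty c1 x d1 y d2 e : joins e x y ->
  e \notin cycle_edges (c1 ++ x :: d1 ++ y :: d2) -> (d1 != [::]) && (d2 ++ c1 != [::]).
Proof.
move=> e_xy; apply: contraR; rewrite negb_and !negbK => /orP[/eqP d10|].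
  by apply: (mem_edges_along e_xy); rewrite d10 /= -catA /= mem_consec.
rewrite -size_eq0 size_cat addn_eq0 !size_eq0 => /andP[/eqP d20 /eqP c10].
apply: (@mem_edges_along _ _ y x); first by rewrite joinsC.
by rewrite d20 c10 /= take0 -catA /=; exact: (mem_consec (x :: d1) [::]).
Qed.

(* The [uniq] condition makes the [x]-[y] paths [a], [b], [c] and the [x']-[y'] path [w]
   internally disjoint. *)
Definition theta_ear x y a b c x' y' (w : seq V) :=
  [/\ uniq (x :: y :: a ++ b ++ c ++ w), sorted adj (x :: rcons a y),
      sorted adj (x :: rcons b y), sorted adj (x :: rcons c y) & sorted adj (x' :: rcons w y')].

(* An ear without inner vertices is an edge not joining consecutive vertices of [p]. *)
Definition ear_off_path x' y' (w p : seq V) :=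
  w = [::] -> ((x', y') \notin consec p) && ((y', x') \notin consec p).

Lemma ear_off_path_of_edges ps x' y' w p :
  path (adj_in (~: edges_along ps)) x' (rcons w y') -> {subset consec p <= ps} ->
  ear_off_path x' y' w p.
Proof.
move=> w_path p_ps w0; move: w_path; rewrite w0 /= andbT => /existsP[e /andP[]].
rewrite inE => e_off e_x'y'.
apply/andP; split; apply: contra e_off => /p_ps; first exact: mem_edges_along.
by apply: mem_edges_along; rewrite joinsC.
Qed.

Lemma theta_ear_swap12 x y a b c x' y' w :
  theta_ear x y a b c x' y' w -> theta_ear x y b a c x' y' w.
Proof.
case=> th_uniq *; split => //.
by apply: (uniq_count_le th_uniq) => z; rewrite /= !count_cat /=; goal_lia.
Qed.

Lemma theta_ear_swap23 x y a b c x' y' w :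
  theta_ear x y a b c x' y' w -> theta_ear x y a c b x' y' w.
Proof.
case=> th_uniq *; split => //.
by apply: (uniq_count_le th_uniq) => z; rewrite /= !count_cat /=; goal_lia.
Qed.

Lemma theta_ear_rev x y a b c x' y' w :
  theta_ear x y a b c x' y' w -> theta_ear x y a b c y' x' (rev w).
Proof.
case=> th_uniq path_a path_b path_c path_w; split => //.
  by apply: (uniq_count_le th_uniq) => z; rewrite /= !count_cat count_rev; goal_lia.
by rewrite -rev_cons_rcons sorted_adj_rev.
Qed.

Lemma sorted_mid (T : Type) (r : rel T) s1 u t v s2 :
  sorted r (s1 ++ u :: t ++ v :: s2) -> sorted r (u :: rcons t v).
Proof. by case/cat_sorted2 => _; rewrite -cat_cons -cat_rcons => /cat_sorted2[]. Qed.

Section Girth.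
Variable g : nat.
Hypothesis girth_le : forall s, simple_cycle s -> g <= size s.
Hypothesis girth_large : #|V| + 3 <= 2 * g.

Lemma girth_le_two_paths x y a b : uniq (x :: y :: a ++ b) ->
  sorted adj (x :: rcons a y) -> sorted adj (x :: rcons b y) -> (a != [::]) || (b != [::]) ->
  g <= size a + size b + 2.
Proof.
move=> xy_uniq path_a path_b ab_nil.
have -> : size a + size b + 2 = size (x :: a ++ y :: rev b) by rewrite /= size_cat /= size_rev; lia.
apply: girth_le; apply/and3P; split.
- rewrite /= size_cat /= size_rev.
  by case: a {path_a xy_uniq} ab_nil => [|? ?]; case: b {path_b} => [|? ?] //=; lia.
- by apply: (uniq_count_le xy_uniq) => z; rewrite /= !count_cat /= count_rev; goal_lia.
- change (sorted adj (x :: rcons (a ++ y :: rev b) x)).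
  rewrite rcons_cat rcons_cons -cat_cons sorted_cat_cons path_a /=.
  by change (sorted adj (y :: rcons (rev b) x)); rewrite -rev_cons_rcons sorted_adj_rev.
Qed.

(* The segment [t] of [a] closes a cycle with the ear, and [b], [c] close another; the two
   cycles share at most two vertices, so their lengths sum to at most [#|V| + 2]. *)
Lemma ear_along_path_false x y a b c x' y' w s1 t s2 :
  theta_ear x y a b c x' y' w -> (b != [::]) || (c != [::]) ->
  x :: rcons a y = s1 ++ x' :: t ++ y' :: s2 -> (t != [::]) || (w != [::]) -> False.
Proof.
case=> th_uniq path_a path_b path_c path_w bc_nil a_split tw_nil.
have size_V : size (x :: y :: a ++ b ++ c ++ w) <= #|V|.
  by rewrite -(card_uniqP th_uniq) max_card.
have bc_cycle : g <= size b + size c + 2.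
  apply: (girth_le_two_paths _ path_b path_c bc_nil).
  by apply: (uniq_count_le th_uniq) => z; rewrite /= !count_cat /=; goal_lia.
have tw_cycle : g <= size t + size w + 2.
  apply: (girth_le_two_paths _ _ path_w tw_nil); last first.
    by rewrite a_split in path_a; exact: sorted_mid path_a.
  apply: (uniq_count_le th_uniq) => z; have := congr1 (count_mem z) a_split.
  by rewrite /= -cats1 !count_cat /= !count_cat /=; goal_lia.
have := congr1 size a_split; rewrite /= size_rcons !size_cat /= size_cat /=.
by move: size_V bc_cycle tw_cycle girth_large; rewrite /= !size_cat; goal_lia.
Qed.

Lemma ear_one_path_false x y a b c x' y' w :
  theta_ear x y a b c x' y' w -> (b != [::]) || (c != [::]) -> x' != y' ->
  x' \in x :: rcons a y -> y' \in x :: rcons a y -> ear_off_path x' y' w (x :: rcons a y) -> False.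
Proof.
move=> th bc_nil x'y' x'_a y'_a off_a.
have [[s1 [t [s2 a_split]]]|[s1 [t [s2 a_split]]]] := split_two x'_a y'_a x'y'.
  apply: (ear_along_path_false th bc_nil a_split).
  case: (eqVneq w [::]) => [w0|_] /=; last by rewrite orbT.
  case: (eqVneq t [::]) => [t0|] //; case/andP: (off_a w0).
  by rewrite a_split t0 cat0s mem_consec.
apply: (ear_along_path_false (theta_ear_rev th) bc_nil a_split).
case: (eqVneq w [::]) => [w0|wn]; last by rewrite orbC -size_eq0 size_rev size_eq0 wn.
case: (eqVneq t [::]) => [t0|] //; case/andP: (off_a w0).
by rewrite a_split t0 cat0s mem_consec.
Qed.

(* The four cycles [a c], [b c], and the two through the ear and [x] resp. [y] cover every vertex
   at most twice, so their lengths sum to at most [2 * #|V| + 4]. *)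
Lemma ear_two_paths_false x y a b c x' y' w :
  theta_ear x y a b c x' y' w -> x' \in a -> y' \in b -> False.
Proof.
case=> th_uniq path_a path_b path_c path_w /mem_split[a1 [a2 a_def]] /mem_split[b1 [b2 b_def]].
subst a b.
have size_V : size (x :: y :: (a1 ++ x' :: a2) ++ (b1 ++ y' :: b2) ++ c ++ w) <= #|V|.
  by rewrite -(card_uniqP th_uniq) max_card.
move: path_a; rewrite rcons_cat rcons_cons -cat_cons sorted_cat_cons => /andP[path_a1 path_a2].
move: path_b; rewrite rcons_cat rcons_cons -cat_cons sorted_cat_cons => /andP[path_b1 path_b2].
have ac_cycle : g <= size (a1 ++ x' :: a2) + size c + 2.
  apply: (girth_le_two_paths _ _ path_c).
  - by apply: (uniq_count_le th_uniq) => z; rewrite /= !count_cat /= ?count_cat /=; goal_lia.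
  - by rewrite rcons_cat rcons_cons -cat_cons sorted_cat_cons path_a1.
  - by case: (a1).
have bc_cycle : g <= size (b1 ++ y' :: b2) + size c + 2.
  apply: (girth_le_two_paths _ _ path_c).
  - by apply: (uniq_count_le th_uniq) => z; rewrite /= !count_cat /= ?count_cat /=; goal_lia.
  - by rewrite rcons_cat rcons_cons -cat_cons sorted_cat_cons path_b1.
  - by case: (b1).
have x_cycle : g <= size (rev a1 ++ x :: b1) + size w + 2.
  apply: (girth_le_two_paths _ _ path_w).
  - apply: (uniq_count_le th_uniq) => z.
    by rewrite /= !count_cat /= ?count_cat /= ?count_rev; goal_lia.
  - rewrite rcons_cat rcons_cons -cat_cons sorted_cat_cons; apply/andP; split; last exact: path_b1.
    by change (sorted adj (x' :: rcons (rev a1) x)); rewrite -rev_cons_rcons sorted_adj_rev.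
  - by case: (rev a1).
have y_cycle : g <= size (a2 ++ y :: rev b2) + size w + 2.
  apply: (girth_le_two_paths _ _ path_w).
  - apply: (uniq_count_le th_uniq) => z.
    by rewrite /= !count_cat /= ?count_cat /= ?count_rev; goal_lia.
  - rewrite rcons_cat rcons_cons -cat_cons sorted_cat_cons; apply/andP; split; first exact: path_a2.
    by change (sorted adj (y :: rcons (rev b2) y')); rewrite -rev_cons_rcons sorted_adj_rev.
  - by case: (a2).
move: size_V ac_cycle bc_cycle x_cycle y_cycle girth_large.
by rewrite /= !size_cat /= ?size_cat /= !size_rev; goal_lia.
Qed.

Lemma theta_ear_false x y a b c x' y' w :
  theta_ear x y a b c x' y' w -> (a == [::]) + (b == [::]) + (c == [::]) <= 1 -> x' != y' ->
  x' \in x :: y :: a ++ b ++ c -> y' \in x :: y :: a ++ b ++ c ->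
  (forall p, p \in [:: a; b; c] -> ear_off_path x' y' w (x :: rcons p y)) -> False.
Proof.
move=> th nil_le1 x'y' x'_in y'_in off.
have [bc_nil ac_nil ab_nil] : [/\ (b != [::]) || (c != [::]), (a != [::]) || (c != [::]) &
                                   (a != [::]) || (b != [::])].
  by move: nil_le1; case: (a == [::]); case: (b == [::]); case: (c == [::]).
have on_a := ear_one_path_false th bc_nil x'y'.
have on_b := ear_one_path_false (theta_ear_swap12 th) ac_nil x'y'.
have on_c := ear_one_path_false (theta_ear_swap12 (theta_ear_swap23 th)) ab_nil x'y'.
have off_a : ear_off_path x' y' w (x :: rcons a y) by apply: off; rewrite !inE eqxx.
have off_b : ear_off_path x' y' w (x :: rcons b y) by apply: off; rewrite !inE eqxx orbT.
have off_c : ear_off_path x' y' w (x :: rcons c y) by apply: off; rewrite !inE eqxx !orbT.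
have mem_theta z : z \in x :: y :: a ++ b ++ c -> [\/ z \in [:: x; y], z \in a, z \in b | z \in c].
  rewrite (_ : x :: y :: _ = [:: x; y] ++ a ++ b ++ c) // !mem_cat.
  by case/orP => [|/orP[|/orP[]]]; [constructor 1 | constructor 2 | constructor 3 | constructor 4].
have on_path z p : (z \in [:: x; y]) || (z \in p) -> z \in x :: rcons p y.
  by rewrite !inE mem_rcons inE; case/orP => [/orP[]|] ->; rewrite ?orbT.
case: (mem_theta _ x'_in) => x'_p; case: (mem_theta _ y'_in) => y'_p.
all: first
  [ by apply: on_a => //; apply: on_path; rewrite ?x'_p ?y'_p ?orbT
  | by apply: on_b => //; apply: on_path; rewrite ?x'_p ?y'_p ?orbT
  | by apply: on_c => //; apply: on_path; rewrite ?x'_p ?y'_p ?orbT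
  | by apply: (ear_two_paths_false th)
  | by apply: (ear_two_paths_false (theta_ear_rev th))
  | by apply: (ear_two_paths_false (theta_ear_swap23 th))
  | by apply: (ear_two_paths_false (theta_ear_rev (theta_ear_swap23 th)))
  | by apply: (ear_two_paths_false (theta_ear_swap23 (theta_ear_swap12 th)))
  | by apply: (ear_two_paths_false (theta_ear_rev (theta_ear_swap23 (theta_ear_swap12 th)))) ].
Qed.

Hypothesis many_edges : #|V| + 2 <= #|E|.

(* Deleting the at most [size c + 1] edges along [ps] leaves more edges than vertices off [c];
   a cycle among the latter would be shorter than [g]. *)
Lemma ear_off_edges c ps : uniq c -> g <= size c -> size ps <= size c + 1 ->
  exists x y w, [/\ x \in c, y \in c, x != y, uniq w &
    all (fun z => z \notin c) w && path (adj_in (~: edges_along ps)) x (rcons w y)].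
Proof.
move=> c_uniq g_c ps_c.
have card_c : #|[set z in c]| = size c by rewrite cardsE (card_uniqP c_uniq).
have c_V : size c <= #|V| by rewrite -card_c max_card.
have card_off : #|[set: V] :\: [set z in c]| = #|V| - size c.
  by rewrite setTD -card_c -(cardsC [set z in c]) addKn.
have card_F : #|~: edges_along ps| = #|E| - #|edges_along ps|.
  by rewrite -(cardsC (edges_along ps)) addKn.
have card_ps := card_edges_along ps.
case: (@cycle_or_ear_of_many_edges [set: V] [set z in c] (~: edges_along ps)).
- by move=> e _; rewrite !in_setT.
- by rewrite card_off card_F; move: many_edges card_ps ps_c c_V; goal_lia.
- case=> s [/girth_le g_s]; rewrite card_off.
  by move: g_s g_c c_V girth_large; goal_lia.
case=> x [y [w [xc yc xy w_uniq /andP[w_in w_path]]]].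
exists x, y, w; rewrite !inE in xc yc; split => //; rewrite w_path andbT.
by apply/allP => z /(allP w_in); rewrite !inE andbT.
Qed.

(* [d1] and [b] are the two arcs of the shortest cycle [c] between the ends of its ear [u]; with
   [u] they form a theta graph, which gets a further ear [w]. *)
Lemma cycle_ear_false c1 x d1 y d2 u (c := c1 ++ x :: d1 ++ y :: d2) :
  simple_cycle c -> size c = g -> uniq u -> all (fun z => z \notin c) u ->
  path (adj_in (~: cycle_edges c)) x (rcons u y) -> False.
Proof.
move=> c_cycle c_size u_uniq u_off u_path; case/and3P: c_cycle => c_gt2 c_uniq c_adj.
have [path_d1 path_b] := cycle_arcs c_adj; set b := rev (d2 ++ c1) in path_b.
have path_u : sorted adj (x :: rcons u y) := sub_path (@adj_in_adj _) u_path.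
have size_b : size b = size c1 + size d2 by rewrite size_rev size_cat addnC.
have g_def : g = size d1 + size b + 2.
  by rewrite -c_size size_b /c size_cat /= size_cat /=; goal_lia.
have cu_uniq : uniq (c ++ u).
  rewrite cat_uniq c_uniq u_uniq andbT -all_predC; apply/allP => z /(allP u_off) /=.
  by rewrite /c.
set ps := consec (x :: rcons d1 y) ++ consec (x :: rcons b y) ++ consec (x :: rcons u y).
have [||x' [y' [w [x'_in y'_in x'y' w_uniq /andP[w_off w_path]]]]] :=
  @ear_off_edges (c ++ u) ps cu_uniq.
- by rewrite size_cat c_size leq_addr.
- rewrite /ps !size_cat !size_consec /= !size_rcons.
  by move: g_def c_size; rewrite /c size_b size_cat /= size_cat /=; goal_lia.
have cu_perm : perm_eq (c ++ u) (x :: y :: d1 ++ b ++ u).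
  apply/permP => z; rewrite /c /b /= !count_cat /= !count_cat /= count_rev ?count_cat /=; goal_lia.
have cuw_uniq : uniq (c ++ u ++ w).
  by rewrite catA cat_uniq cu_uniq w_uniq andbT -all_predC; apply/allP => z /(allP w_off).
have th_uniq : uniq (x :: y :: d1 ++ b ++ u ++ w).
  apply: (uniq_count_le cuw_uniq) => z.
  by rewrite /c /b /= !count_cat /= !count_cat /= count_rev ?count_cat /=; goal_lia.
have d1b_nil : ~~ ((d1 == [::]) && (b == [::])).
  apply: contraL c_gt2 => /andP[/eqP d10 /eqP b0]; move: size_b.
  by rewrite /c b0 d10 size_cat /=; goal_lia.
have u_nil : u = [::] -> (d1 != [::]) && (b != [::]).
  move=> u0; move: u_path; rewrite u0 /= andbT => /existsP[e /andP[]]; rewrite inE => e_off e_xy.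
  case/andP: (chord_arcs_nonempty e_xy e_off) => -> /=.
  by rewrite -!size_eq0 size_b size_cat addnC.
apply: (@theta_ear_false x y d1 b u x' y' w) => //.
- by split; [| exact: path_d1 | | | exact: sub_path (@adj_in_adj _) _ _ w_path].
- move: d1b_nil u_nil; case: (d1 == [::]); case: (b == [::]); case: (eqVneq u [::]) => // -> /=.
  + by move=> _ /(_ erefl).
  + by move=> _ /(_ erefl).
- by rewrite -(perm_mem cu_perm).
- by rewrite -(perm_mem cu_perm).
move=> p p_in; apply: (ear_off_path_of_edges w_path) => q.
by move: p_in; rewrite /ps !mem_cat !inE => /or3P[] /eqP-> ->; rewrite ?orbT.
Qed.

End Girth.

Lemma simple_cycle_exists : #|V| < #|E| -> exists s, simple_cycle s.
Proof.
move=> VE; case: (@cycle_or_ear_of_many_edges [set: V] set0 [set: E]).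
- by move=> e _; rewrite !in_setT.
- by rewrite setD0 !cardsT.
- by case=> s [s_cycle _]; exists s.
by case=> x [y [w [x0]]]; rewrite inE in x0.
Qed.

Lemma shortest_simple_cycle : #|V| < #|E| ->
  exists2 c, simple_cycle c & forall s, simple_cycle s -> size c <= size s.
Proof.
move=> VE; have [s0 s0_cycle] := simple_cycle_exists VE.
pose has_cycle k := [exists t : k.-tuple V, simple_cycle t].
have [g /existsP[t t_cycle] g_min] := ex_minnP (ex_intro has_cycle (size s0)
  (introT existsP (ex_intro _ (in_tuple s0) s0_cycle))).
exists t => // s s_cycle; rewrite size_tuple; apply: g_min.
by apply/existsP; exists (in_tuple s).
Qed.

Lemma short_simple_cycle : #|V| + 2 <= #|E| ->
  exists s, simple_cycle s /\ 2 * size s <= #|V| + 2.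
Proof.
move=> many_edges; have [|c c_cycle girth_le] := shortest_simple_cycle; first by lia.
pose g := size c; have c_size : size c = g by [].
case: (leqP (2 * g) (#|V| + 2)) => [g_small|g_large]; first by exists c.
exfalso; have girth_large : #|V| + 3 <= 2 * g by lia.
case/and3P: (c_cycle) => c_gt2 c_uniq _.
have [||x [y [u [xc yc xy u_uniq /andP[u_off u_path]]]]] :=
  @ear_off_edges g girth_le girth_large many_edges c (consec (c ++ take 1 c)) c_uniq.
- by rewrite c_size.
- by rewrite size_consec size_cat size_take (ltnW c_gt2) addn1 leqnSn.
case: (split_two xc yc xy) => [[c1 [d1 [d2 c_def]]]|[c1 [d1 [d2 c_def]]]];
  rewrite c_def in c_cycle c_size u_off u_path.
  exact: (cycle_ear_false girth_le girth_large many_edges c_cycle c_size u_uniq u_off u_path).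
apply: (cycle_ear_false girth_le girth_large many_edges c_cycle c_size (u := rev u)).
- by rewrite rev_uniq.
- by rewrite all_rev.
change (sorted (adj_in (~: cycle_edges (c1 ++ y :: d1 ++ x :: d2))) (y :: rcons (rev u) x)).
by rewrite -rev_cons_rcons sorted_rev_sym //; exact: adj_in_sym.
Qed.

End Simple.

Lemma joins_endsE e e' x y : joins e x y -> joins e' x y = joins e' (ends e).1 (ends e).2.
Proof. by case/orP => /eqP ->; rewrite // joinsC. Qed.

Lemma loop_has_cycle e : (ends e).1 = (ends e).2 -> has_cycle_of_length ends 1.
Proof.
move=> loop_e; split => //; exists (fun _ => (ends e).1), (fun _ => e).
have const_inj (T : Type) (t : T) : injective (fun _ : 'I_1 => t).
  by move=> i j _; rewrite (ord1 i) (ord1 j).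
split; [exact: const_inj | split; first exact: const_inj].
by move=> _; rewrite /joins; case: (ends e) loop_e => a b /= ->; rewrite eqxx.
Qed.

Lemma parallel_has_cycle e e' : e != e' -> (ends e).1 != (ends e).2 ->
  joins e' (ends e).1 (ends e).2 -> has_cycle_of_length ends 2.
Proof.
move=> ee' no_loop_e e'_joins; split => //.
exists (fun i : 'I_2 => nth (ends e).1 [:: (ends e).1; (ends e).2] i).
exists (fun i : 'I_2 => nth e [:: e; e'] i); split; [|split].
- by move=> i j /eqP; rewrite nth_uniq /= ?inE ?andbT // => /eqP/val_inj.
- by move=> i j /eqP; rewrite nth_uniq /= ?inE ?andbT // => /eqP/val_inj.
case=> [[|[|i]] i_lt] //=; last by rewrite joinsC.
by rewrite /joins -surjective_pairing eqxx.
Qed.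

End Graph.

Theorem lemma3p3 (V E : finType) (ends : E -> V * V) :
  #|V| + 2 <= #|E| ->
  exists k : nat, 2 * k <= #|V| + 2 /\ has_cycle_of_length ends k.
Proof.
move=> many_edges.
case: (pickP (fun e => (ends e).1 == (ends e).2)) => [e /eqP loop_e|no_loop].
  by exists 1; split; [lia | exact: loop_has_cycle loop_e].
have loop_free e : (ends e).1 != (ends e).2 by rewrite no_loop.
case: (pickP (fun p : E * E => (p.1 != p.2) && joins ends p.2 (ends p.1).1 (ends p.1).2)).
  case=> e e' /andP[/= ee' e'_joins]; exists 2; split; last exact: parallel_has_cycle e'_joins.
  have V_gt1 : 1 < #|V| by apply/card_gt1P; exists (ends e).1, (ends e).2.
  exact: leq_add V_gt1 (leqnn 2).
move=> no_parallel.
have [|s [s_cycle s_short]] := short_simple_cycle loop_free _ many_edges.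
  move=> e e' x y e_xy e'_xy; apply/eqP; apply: contraFT (no_parallel (e, e')) => /= ee'.
  by rewrite ee' -(joins_endsE e' e_xy) e'_xy.
by exists (size s); split => //; exact: simple_cycle_has_cycle.
Qed.
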